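(* Let $S$ be a finite set of points in the plane, let $\mathcal D$ be a set of $k$ pairwise non-opposite directions such that $S$ is in $\mathcal D$-general position, and let $T$ be a $\mathcal D$-monotone geometric spanning tree of $S$. Then the maximum degree of $T$ is at most $2k$.
   Context: A direction is a unit vector in $\mathbb{R}^2$; two directions $d,d'$ are opposite if $d'=-d$. A finite point set $S$ is in $d$-general position if no two points of $S$ lie on a common line orthogonal to $d$; $S$ is in $\mathcal D$-general position if it is in $d$-general position for every $d\in\mathcal D$. A geometric path $\langle p_1,\dots,p_r\rangle$ is $d$-monotone if its vertex set is in $d$-general position and $\langle p_1,d\rangle,\dots,\langle p_r,d\rangle$ is strictly increasing or strictly decreasing. A geometric spanning tree of $S$ is a tree with vertex set $S$ whose edges are straight segments. Given a finite set $\mathcal D$ of pairwise non-opposite directions, a geometric spanning tree $T$ of $S$ is $\mathcal D$-monotone if for every pair of vertices $u,v$ there is $d\in\mathcal D$ such that the unique path of $T$ from $u$ to $v$ is $d$-monotone. *)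

From HB Require Import structures.
From mathcomp Require Import all_boot all_order all_algebra.
Set Implicit Arguments. Unset Strict Implicit. Unset Printing Implicit Defensive.
Import Order.TTheory GRing.Theory Num.Theory.
Local Open Scope ring_scope.

Section Geometry.
Variable R : realFieldType.

Definition pt := (R * R)%type.

Definition dotp (p d : pt) : R := p.1 * d.1 + p.2 * d.2.

Definition is_direction (d : pt) : Prop := d.1 ^+ 2 + d.2 ^+ 2 = 1.

Definition opposite (d d' : pt) : Prop := d' = (- d.1, - d.2).

Definition pairwise_non_opposite (D : seq pt) : Prop :=
  {in D &, forall d d', ~ opposite d d'}.

Definition d_general_position (d : pt) (S : seq pt) : Prop :=
  {in S &, forall p q, dotp p d = dotp q d -> p = q}.

Definition D_general_position (D : seq pt) (S : seq pt) : Prop :=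
  forall d, d \in D -> d_general_position d S.

Definition d_monotone (d : pt) (s : seq pt) : Prop :=
  d_general_position d s /\
  (sorted <%R (map (dotp ^~ d) s) \/ sorted >%R (map (dotp ^~ d) s)).

(* A geometric graph on the vertex set S, given by its adjacency relation E
   (an edge uv is the straight segment between u and v). *)
Definition graph_on (S : seq pt) (E : rel pt) : Prop :=
  [/\ forall u v, E u v -> (u \in S) && (v \in S),
      forall u v, E u v = E v u &
      forall u, ~~ E u u].

Definition simple_path (E : rel pt) (u v : pt) (p : seq pt) : Prop :=
  [/\ path E u p, last u p = v & uniq (u :: p)].

Definition connected_on (S : seq pt) (E : rel pt) : Prop :=
  {in S &, forall u v, exists p, path E u p /\ last u p = v}.

Definition acyclic (E : rel pt) : Prop :=
  forall u p, uniq (u :: p) -> (2 <= size p)%N -> path E u p -> ~~ E (last u p) u.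

Definition spanning_tree (S : seq pt) (E : rel pt) : Prop :=
  [/\ graph_on S E, connected_on S E & acyclic E].

Definition D_monotone_tree (D S : seq pt) (E : rel pt) : Prop :=
  spanning_tree S E /\
  {in S &, forall u v, u != v -> forall p, simple_path E u v p ->
     exists2 d, d \in D & d_monotone d (u :: p)}.

Definition degree (S : seq pt) (E : rel pt) (v : pt) : nat := count (E v) S.

End Geometry.

From HB Require Import structures.
From mathcomp Require Import all_boot all_order all_algebra ring lra.
Set Implicit Arguments.
Unset Strict Implicit.
Unset Printing Implicit Defensive.
Import Order.TTheory GRing.Theory Num.Theory.
Local Open Scope ring_scope.

(* Fix a vertex v and a direction a in D.  For two distinct neighbours w, w'
   the path w v w' is d-monotone for some d in D, i.e. d separates the edge
   vectors w - v and w' - v.  General position splits these vectors into the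
   two open half-planes bounded by the line orthogonal to a, and it suffices
   to show that each half-plane holds at most |D| of them.  In the half-plane
   of b (= a or -a), attach to a vector u the number of lines of D swept when
   turning from b to u rotated by a quarter turn.  This count increases
   strictly when u turns counterclockwise past a line of D, and it misses the
   line of a itself, so it is an injection of the vectors into [0, |D|). *)

Lemma count_lt_subpred (T : Type) (a1 a2 : pred T) (s : seq T) :
  subpred a1 a2 -> has (predD a2 a1) s -> (count a1 s < count a2 s)%N.
Proof.
move=> sub12; elim: s => //= x s IH /orP[/andP[n1 h2] | hs].
  by rewrite (negbTE n1) h2 add0n add1n ltnS sub_count.
rewrite -addnS leq_add ?IH //.
by case: (a1 x) (@sub12 x) => // ->.
Qed.

Section PlaneSweep.
Variable R : realFieldType.
Implicit Types u w b d : pt R.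

Definition cross u w : R := u.1 * w.2 - u.2 * w.1.

Definition separates d u w : bool := dotp u d * dotp w d < 0.

Definition separated (D : seq (pt R)) u w : bool := has (fun d => separates d u w) D.

(* For 0 < dotp u b, this holds iff the line of d, measured counterclockwise
   from b, lies strictly before the direction of u turned a quarter turn. *)
Definition sweeps b u d : bool := 0 < dotp u d * cross b d.

Definition sweep_count (D : seq (pt R)) b u : nat := count (sweeps b u) D.

Lemma dotpB u w d : dotp (u - w) d = dotp u d - dotp w d.
Proof. by rewrite /dotp /=; ring. Qed.

Lemma dotpN u d : dotp u (- d) = - dotp u d.
Proof. by rewrite /dotp /=; ring. Qed.

Lemma crossC u w : cross w u = - cross u w.
Proof. by rewrite /cross; ring. Qed.

Lemma dotp_cross u w b d :
  dotp w d * dotp u b = dotp u d * dotp w b + cross u w * cross b d.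
Proof. by rewrite /dotp /cross; ring. Qed.

Section Halfplane.
Variables u w b : pt R.
Hypotheses (ub : 0 < dotp u b) (wb : 0 < dotp w b).

Lemma sweeps_ccw d : 0 < cross u w -> sweeps b u d -> sweeps b w d.
Proof.
rewrite /sweeps => uw ud.
have key : dotp w d * cross b d * dotp u b =
    dotp u d * cross b d * dotp w b + cross u w * cross b d ^+ 2.
  by rewrite mulrAC dotp_cross; ring.
have : 0 < dotp w d * cross b d * dotp u b.
  have := mulr_ge0 (ltW uw) (sqr_ge0 (cross b d)).
  by rewrite key; have := mulr_gt0 ud wb; lra.
by rewrite pmulr_lgt0.
Qed.

Lemma sweeps_separates d : 0 < cross u w -> separates d u w ->
  sweeps b w d && ~~ sweeps b u d.
Proof.
rewrite /sweeps /separates -leNgt => uw sep.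
have rc : cross u w * cross b d = dotp w d * dotp u b - dotp u d * dotp w b.
  by rewrite dotp_cross; ring.
have sepb : dotp u d * dotp w d * dotp w b < 0 by rewrite pmulr_llt0.
have w_sweeps : 0 < dotp w d * cross b d.
  rewrite -(pmulr_rgt0 _ uw) mulrCA rc.
  by have := mulr_ge0 (sqr_ge0 (dotp w d)) (ltW ub); lra.
have u_unswept : dotp u d * cross b d < 0.
  rewrite -(pmulr_rlt0 _ uw) mulrCA rc.
  have : dotp u d * dotp w d * dotp u b < 0 by rewrite pmulr_llt0.
  by have := mulr_ge0 (sqr_ge0 (dotp u d)) (ltW wb); lra.
by rewrite w_sweeps ltW.
Qed.

Lemma collinear_not_separates d : cross u w = 0 -> ~~ separates d u w.
Proof.
rewrite /separates -leNgt => uw.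
have e := dotp_cross u w b d; rewrite uw mul0r addr0 in e.
have : 0 <= dotp u d * dotp w d * dotp u b.
  by rewrite -mulrA e mulrA -expr2 mulr_ge0 ?sqr_ge0 ?ltW.
by rewrite pmulr_lge0.
Qed.

Lemma sweep_count_lt D : 0 < cross u w -> separated D u w ->
  (sweep_count D b u < sweep_count D b w)%N.
Proof.
move=> uw /hasP[d dD sep]; apply: count_lt_subpred => [x|].
  exact: sweeps_ccw.
by apply/hasP; exists d => //=; rewrite andbC sweeps_separates.
Qed.

End Halfplane.

Lemma sweep_count_lt_size D b u a : a \in D -> cross b a = 0 ->
  (sweep_count D b u < size D)%N.
Proof.
move=> aD ba; rewrite -count_predT; apply: count_lt_subpred => //.
by apply/hasP; exists a; rewrite //= /sweeps ba mulr0 ltxx.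
Qed.

Lemma halfplane_separated_size_le D (L : seq (pt R)) b a :
  uniq L -> {in L, forall u, 0 < dotp u b} ->
  {in L &, forall u w, u != w -> separated D u w} ->
  a \in D -> cross b a = 0 -> (size L <= size D)%N.
Proof.
move=> uL Lb sepL aD ba.
have inj : {in L &, injective (sweep_count D b)}.
  move=> u w uL' wL eq_count; apply/eqP; apply: contraT => uw.
  wlog cross_ge0 : u w uL' wL eq_count uw / 0 <= cross u w.
    move=> gen; have [|/ltW] := lerP 0 (cross u w); first exact: gen.
    rewrite -oppr_ge0 -crossC; apply: gen => //; by rewrite eq_sym.
  have sep_uw := sepL u w uL' wL uw.
  move: cross_ge0; rewrite le_eqVlt => /orP[/eqP/esym uw0 | uw_gt0].
    have /hasP[d _] := sep_uw.
    by rewrite (negbTE (collinear_not_separates (Lb _ uL') (Lb _ wL) d uw0)).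
  by have := sweep_count_lt (Lb _ uL') (Lb _ wL) uw_gt0 sep_uw; rewrite eq_count ltnn.
rewrite -(size_map (sweep_count D b)) -(size_iota 0 (size D)).
apply: uniq_leq_size; first by rewrite map_inj_in_uniq.
by move=> _ /mapP[u _ ->]; rewrite mem_iota add0n (sweep_count_lt_size _ aD).
Qed.

Lemma separated_size_le D (L : seq (pt R)) a :
  uniq L -> a \in D -> {in L, forall u, dotp u a != 0} ->
  {in L &, forall u w, u != w -> separated D u w} -> (size L <= 2 * size D)%N.
Proof.
move=> uL aD La sepL.
pose pos u := 0 < dotp u a.
have sep_filter P : {in filter P L &, forall u w, u != w -> separated D u w}.
  by move=> u w; rewrite !mem_filter => /andP[_ uL'] /andP[_ wL]; exact: sepL.
rewrite -(count_predC pos) mul2n -addnn -!size_filter.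
apply: leq_add.
  apply: (halfplane_separated_size_le (b := a)) (filter_uniq _ uL) _ (sep_filter _) aD _.
  - by move=> u; rewrite mem_filter => /andP[].
  - by rewrite /cross mulrC subrr.
apply: (halfplane_separated_size_le (b := - a)) (filter_uniq _ uL) _ (sep_filter _) aD _.
- move=> u; rewrite mem_filter /pos /= => /andP[u_neg uL'].
  by rewrite dotpN oppr_gt0 lt_neqAle leNgt u_neg La.
- by rewrite /cross /=; ring.
Qed.

End PlaneSweep.

Lemma graph_on_edge_neq (R : realFieldType) (S : seq (pt R)) (E : rel (pt R))
    (u w : pt R) :
  graph_on S E -> E u w -> w != u.
Proof. by case=> _ _ Eirr; apply: contraTneq => ->; rewrite (negbTE (Eirr u)). Qed.

Lemma D_monotone_tree_separated (R : realFieldType) (D S : seq (pt R))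
    (E : rel (pt R)) (v w w' : pt R) :
  D_monotone_tree D S E -> v \in S -> E v w -> E v w' -> w != w' ->
  separated D (w - v) (w' - v).
Proof.
move=> [[gE _ _] monE] vS vw vw' ww'.
have [ES Esym _] := gE.
have [/andP[_ wS] /andP[_ w'S]] := (ES _ _ vw, ES _ _ vw').
have [d dD [_ mon]] : exists2 d, d \in D & d_monotone d [:: w; v; w'].
  apply: (monE w w' wS w'S ww'); split => //=; first by rewrite -Esym vw vw'.
  by rewrite !inE negb_or ww' (graph_on_edge_neq gE vw) eq_sym (graph_on_edge_neq gE vw').
apply/hasP; exists d => //; rewrite /separates !dotpB.
by move: mon => /= [/and3P[? ? _] | /and3P[? ? _]]; nra.
Qed.

Theorem lemma3 (R : realFieldType) (S : seq (pt R)) (D : seq (pt R)) (k : nat)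
  (E : rel (pt R)) :
  uniq S -> uniq D -> size D = k ->
  (forall d, d \in D -> is_direction d) ->
  pairwise_non_opposite D ->
  D_general_position D S ->
  D_monotone_tree D S E ->
  forall v, v \in S -> (degree S E v <= 2 * k)%N.
Proof.
move=> uS _ <- _ _ gpS monE v vS.
have [[gE _ _] monD] := monE.
have nbr w : w \in filter (E v) S -> [/\ E v w, w \in S & w != v].
  by rewrite mem_filter => /andP[vw wS]; rewrite vw wS (graph_on_edge_neq gE).
rewrite /degree -size_filter -(size_map (fun w => w - v)).
case eN: (filter (E v) S) => [|w0 N] //; rewrite -eN.
have /nbr[vw0 w0S w0v] : w0 \in filter (E v) S by rewrite eN mem_head.
have [a aD _] : exists2 a, a \in D & d_monotone a [:: v; w0].
  apply: (monD v w0 vS w0S); first by rewrite eq_sym.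
  by split; rewrite /= ?vw0 // inE andbT eq_sym.
apply: (separated_size_le (a := a)) => //.
- by rewrite (map_inj_uniq (addIr _)) filter_uniq.
- move=> _ /mapP[w /nbr[_ wS wv] ->]; rewrite dotpB subr_eq0.
  by apply: contra_neq wv; exact: gpS.
- move=> _ _ /mapP[w /nbr[vw _ _] ->] /mapP[w' /nbr[vw' _ _] ->] ww'.
  by apply: D_monotone_tree_separated monE vS vw vw' _; apply: contraNneq ww' => ->.
Qed.
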